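(* Let $d\ge 0$, $e=2^d$, and let $\nu$ be a suitable tuple. For every even $n$ with $0\le n\le 2^e-2$, the vectors $M_d^\nu w_n$ and $M_d^\nu w_{n+1}$ are complementary, i.e. $M_d^\nu w_{n+1}=M_d^\nu w_n+\mathbf 1$, where $\mathbf 1$ is the all-ones vector.
   Context: Over $\mathbb{F}_2$, $M_0=(1)$ and $M_{d+1}=\begin{pmatrix} M_d & M_d\\ 0 & M_d\end{pmatrix}$, so $M_d$ is $e\times e$ with $e=2^d$. $w_0,\dots,w_{2^e-1}$ are all vectors of $\mathbb{F}_2^e$ in increasing lexicographic order. $\sigma(a_1\cdots a_n)=a_na_1\cdots a_{n-1}$. A tuple $\nu=(n_1,\dots,n_e)$ of non-negative integers is suitable if $n_e=0$ and $n_{i+1}\le n_i\le n_{i+1}+1$ for $1\le i\le e-1$. If $C_1,\dots,C_e$ are the columns of $M_d$, then $M_d^\nu=(\sigma^{n_1}(C_1),\dots,\sigma^{n_e}(C_e))$. *)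

From HB Require Import structures.
From mathcomp Require Import all_boot all_order all_algebra.
Set Implicit Arguments. Unset Strict Implicit. Unset Printing Implicit Defensive.
Import GRing.Theory.
Local Open Scope ring_scope.

(* Entries of M_d (0-based indices), following the recursion
   M_0 = (1), M_{d+1} = [[M_d, M_d], [0, M_d]]. *)
Fixpoint Mentry (d i j : nat) : bool :=
  match d with
  | 0 => true
  | d'.+1 =>
    let h := (2 ^ d')%N in
    if (i < h)%N then
      (if (j < h)%N then Mentry d' i j else Mentry d' i (j - h))
    else if (j < h)%N then false else Mentry d' (i - h) (j - h)
  end.

Definition Mmx (d : nat) : 'M['F_2]_(2 ^ d) :=
  \matrix_(i < 2 ^ d, j < 2 ^ d) (Mentry d i j)%:R.

(* sigma(a_1 ... a_n) = a_n a_1 ... a_{n-1}: cyclic shift down by one *)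
Definition sigma (n : nat) (v : 'cV['F_2]_n) : 'cV['F_2]_n :=
  \col_(i < n) v (ord_pred i) 0.

(* w_k : k-th vector of F_2^e in increasing lexicographic order,
   i.e. binary expansion of k with the first coordinate most significant *)
Definition wvec (e k : nat) : 'cV['F_2]_e :=
  \col_(i < e) (odd (k %/ 2 ^ (e.-1 - i)))%:R.

(* nu = (n_1,...,n_e) stored 0-based: nth 0 nu i = n_{i+1} *)
Definition suitable (e : nat) (nu : e.-tuple nat) : Prop :=
  nth 0%N nu e.-1 = 0%N /\
  (forall i : nat, (i.+1 < e)%N ->
     (nth 0%N nu i.+1 <= nth 0%N nu i <= (nth 0%N nu i.+1).+1)%N).

Definition Mnu (d : nat) (nu : (2 ^ d).-tuple nat) : 'M['F_2]_(2 ^ d) :=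
  \matrix_(i < 2 ^ d, j < 2 ^ d)
    (iter (nth 0%N nu j) (@sigma (2 ^ d)) (col j (Mmx d))) i 0.

From HB Require Import structures.
From mathcomp Require Import all_boot all_order all_algebra.
From mathcomp Require Import zify.
Local Open Scope ring_scope.
Import GRing.Theory.

(* For even n, w_(n+1) differs from w_n only in the last coordinate, so
   M^nu w_(n+1) - M^nu w_n is the last column of M^nu.  Since n_e = 0 that
   column is the last column of M_d, which is all ones: by the block
   recursion, the last column of M_(d+1) stacks two copies of that of M_d. *)

Lemma Mentry_last_col d i : (i < 2 ^ d)%N -> Mentry d i (2 ^ d).-1.
Proof.
elim: d i => [|d IHd] i //= lt_i.
have pos : (0 < 2 ^ d)%N by rewrite expn_gt0.
have -> : ((2 ^ d.+1).-1 < 2 ^ d)%N = false by rewrite expnS; lia.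
have -> : ((2 ^ d.+1).-1 - 2 ^ d = (2 ^ d).-1)%N by rewrite expnS; lia.
case: ifP => [lt_i_h | /negbT ge_i_h]; first exact: IHd.
by apply: IHd; move: lt_i ge_i_h; rewrite expnS; lia.
Qed.

Lemma col_Mmx_last d (j : 'I_(2 ^ d)) :
  val j = (2 ^ d).-1 -> col j (Mmx d) = const_mx 1.
Proof.
by move=> j_last; apply/matrixP => i k; rewrite !mxE j_last Mentry_last_col.
Qed.

Lemma col_Mnu d (nu : (2 ^ d).-tuple nat) (j : 'I_(2 ^ d)) :
  nth 0%N nu j = 0%N -> col j (Mnu nu) = col j (Mmx d).
Proof. by move=> nu_j; apply/matrixP => i k; rewrite !mxE nu_j /= !mxE. Qed.

Lemma divn_exp2_succ_even n m :
  ~~ odd n -> (0 < m)%N -> (n.+1 %/ 2 ^ m = n %/ 2 ^ m)%N.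
Proof.
move=> n_even m_gt0; rewrite divnS ?expn_gt0 //.
suff -> : (2 ^ m %| n.+1)%N = false by [].
apply/negbTE/negP => /(dvdn_trans (dvdn_exp2l 2 m_gt0)).
by rewrite expn1 dvdn2 /= negbK (negbTE n_even).
Qed.

Lemma wvec_succ_even e k (j : 'I_e) :
  val j = e.-1 -> ~~ odd k -> wvec e k.+1 = wvec e k + delta_mx j 0.
Proof.
move=> j_last k_even; apply/matrixP => i l; rewrite !mxE (ord1 l) eqxx andbT.
have [-> | i_neq_j] := eqVneq i j.
  by rewrite j_last subnn expn0 !divn1 /= (negbTE k_even) add0r.
rewrite addr0 divn_exp2_succ_even //.
by move: i_neq_j (ltn_ord i); rewrite -val_eqE /= j_last; lia.
Qed.

Theorem lemma4 (d : nat) (nu : (2 ^ d).-tuple nat) :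
  suitable nu ->
  forall n : nat, ~~ odd n -> (n <= 2 ^ (2 ^ d) - 2)%N ->
    Mnu nu *m wvec (2 ^ d) n.+1 = Mnu nu *m wvec (2 ^ d) n + const_mx 1.
Proof.
move=> [nu_last _] n n_even _.
have last_lt : ((2 ^ d).-1 < 2 ^ d)%N by rewrite ltn_predL expn_gt0.
pose l := Ordinal last_lt.
rewrite (@wvec_succ_even _ _ l erefl n_even) mulmxDr -(colE l).
by rewrite (@col_Mnu _ _ l nu_last) (@col_Mmx_last _ l erefl).
Qed.
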